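(* A function $\phi:\mathbb{Z}\to\mathbb{H}$ is an extreme point of the convex set $\mathcal{P}^{\mathbb{H}}_*(\mathbb{Z})$ if and only if $\phi$ is a group homomorphism from $(\mathbb{Z},+)$ to $\mathbb{S}$, i.e. $\phi(n)=s^n$ for some $s\in\mathbb{S}$.
   Context: $\mathbb{H}$ is the real quaternion algebra and $\mathbb{S}=\{q\in\mathbb{H}:|q|=1\}$ is the multiplicative group of unit quaternions. For an abelian group $G$ (with the involution $g^*=-g$), a function $\phi:G\to\mathbb{H}$ is positive definite if for all $k$, $g_1,\dots,g_k\in G$ and $q_1,\dots,q_k\in\mathbb{H}$, $\sum_{i,j=1}^k\overline{q_i}\,\phi(g_j-g_i)\,q_j$ is a nonnegative real number. $\mathcal{P}^{\mathbb{H}}_*(G)$ denotes the convex set of positive definite $\phi:G\to\mathbb{H}$ with $\phi(0)=1$. *)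

From mathcomp Require Import all_boot all_order all_algebra.
From mathcomp Require Import reals.
Set Implicit Arguments. Unset Strict Implicit. Unset Printing Implicit Defensive.
Import Order.TTheory GRing.Theory Num.Theory.
Local Open Scope ring_scope.

Record quat (R : realType) := Quat { qre : R; qi : R; qj : R; qk : R }.

Section Quat.
Variable R : realType.
Implicit Types p q : quat R.

Definition qzero : quat R := Quat 0 0 0 0.
Definition qone : quat R := Quat 1 0 0 0.
Definition qadd p q : quat R :=
  Quat (qre p + qre q) (qi p + qi q) (qj p + qj q) (qk p + qk q).
Definition qscale (t : R) q : quat R := Quat (t * qre q) (t * qi q) (t * qj q) (t * qk q).
Definition qmul p q : quat R :=
  Quat (qre p * qre q - qi p * qi q - qj p * qj q - qk p * qk q)
       (qre p * qi q + qi p * qre q + qj p * qk q - qk p * qj q)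
       (qre p * qj q - qi p * qk q + qj p * qre q + qk p * qi q)
       (qre p * qk q + qi p * qj q - qj p * qi q + qk p * qre q).
Definition qconj q : quat R := Quat (qre q) (- qi q) (- qj q) (- qk q).
Definition qnorm2 q : R := qre q ^+ 2 + qi q ^+ 2 + qj q ^+ 2 + qk q ^+ 2.
Definition qunit q : Prop := qnorm2 q = 1.
Definition qnonneg_real q : Prop := qi q = 0 /\ qj q = 0 /\ qk q = 0 /\ 0 <= qre q.

(* positive definite phi : Z -> H  (abelian group Z, g^* = -g) *)
Definition pos_def (phi : int -> quat R) : Prop :=
  forall (k : nat) (g : 'I_k -> int) (q : 'I_k -> quat R),
    qnonneg_real (\big[qadd/qzero]_(i < k) \big[qadd/qzero]_(j < k)
                    qmul (qmul (qconj (q i)) (phi (g j - g i))) (q j)).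

Definition Pstar (phi : int -> quat R) : Prop := pos_def phi /\ phi 0 = qone.

Definition extreme_Pstar (phi : int -> quat R) : Prop :=
  Pstar phi /\
  forall (phi1 phi2 : int -> quat R) (t : R),
    0 < t < 1 -> Pstar phi1 -> Pstar phi2 ->
    (forall n, phi n = qadd (qscale t (phi1 n)) (qscale (1 - t) (phi2 n))) ->
    forall n, phi1 n = phi n /\ phi2 n = phi n.

Definition hom_to_S (phi : int -> quat R) : Prop :=
  (forall m n, phi (m + n) = qmul (phi m) (phi n)) /\ (forall n, qunit (phi n)).
End Quat.

From mathcomp Require Import all_boot all_order all_algebra.
From mathcomp Require Import reals.
From mathcomp Require Import ring lra zify.
From HB Require Import structures.
Set Implicit Arguments. Unset Strict Implicit. Unset Printing Implicit Defensive.
Import Order.TTheory GRing.Theory Num.Theory.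
Local Open Scope ring_scope.

(* Every phi in P_* is hermitian, phi (-n) = conj (phi n), and takes values in
   the closed unit ball of H.  A homomorphism n |-> s^n is positive definite
   (its form is a Gram form) and lies on the unit sphere, whose points are
   extreme in the strictly convex ball; hence it is extreme.
   Conversely let phi be extreme and c = Re (phi 1).  If |phi 1| = 1, positivity
   of the form at the three points 0, 1, -n forces phi (n + 1) = phi n phi 1,
   so phi is a homomorphism.  If |phi 1| < 1, writing phi as a combination of
   the normalised positive definite functions 2 phi n +- (phi (n + 1) + phi (n - 1))
   shows phi (n + 1) + phi (n - 1) = 2 c phi n; the two homomorphisms generated
   by the endpoints of the chord of the unit sphere through phi 1 with real
   part c satisfy the same recurrence, so phi is a proper convex combination
   of them, contradicting extremality. *)

Lemma quat_eqP (R : realType) (p q : quat R) :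
  qre p = qre q -> qi p = qi q -> qj p = qj q -> qk p = qk q -> p = q.
Proof. by case: p; case: q => /= ???? ???? -> -> -> ->. Qed.

Ltac qext := apply: quat_eqP => /=.

Lemma qaddA (R : realType) : associative (@qadd R).
Proof. by move=> p q r; qext; ring. Qed.
Lemma qaddC (R : realType) : commutative (@qadd R).
Proof. by move=> p q; qext; ring. Qed.
Lemma qadd0q (R : realType) : left_id (qzero R) (@qadd R).
Proof. by move=> p; qext; ring. Qed.

HB.instance Definition _ (R : realType) :=
  Monoid.isComLaw.Build (quat R) (qzero R) (@qadd R) (@qaddA R) (@qaddC R) (@qadd0q R).

Section QuatAlgebra.
Variable R : realType.
Implicit Types (p q r u : quat R) (t : R).

Definition qsub p q : quat R :=
  Quat (qre p - qre q) (qi p - qi q) (qj p - qj q) (qk p - qk q).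

Lemma qaddIr q p p' : qadd p q = qadd p' q -> p = p'.
Proof.
move=> e; move: (congr1 (@qre R) e) (congr1 (@qi R) e).
move: (congr1 (@qj R) e) (congr1 (@qk R) e) => /= ????.
by qext; lra.
Qed.

Lemma qmulA : associative (@qmul R).
Proof. by move=> p q r; qext; ring. Qed.
Lemma qmul1q p : qmul (qone R) p = p.
Proof. by qext; ring. Qed.
Lemma qmulq1 p : qmul p (qone R) = p.
Proof. by qext; ring. Qed.
Lemma qconj1 : qconj (qone R) = qone R.
Proof. by qext; ring. Qed.

Lemma qmulCq p : qmul (qconj p) p = Quat (qnorm2 p) 0 0 0.
Proof. by rewrite /qnorm2; qext; ring. Qed.
Lemma qmulqC p : qmul p (qconj p) = Quat (qnorm2 p) 0 0 0.
Proof. by rewrite /qnorm2; qext; ring. Qed.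

Lemma qnorm2M p q : qnorm2 (qmul p q) = qnorm2 p * qnorm2 q.
Proof. by rewrite /qnorm2 /=; ring. Qed.
Lemma qnorm2C p : qnorm2 (qconj p) = qnorm2 p.
Proof. by rewrite /qnorm2 /=; ring. Qed.

Lemma qnorm2_ge0 p : 0 <= qnorm2 p.
Proof. by rewrite /qnorm2; case: p => a b c d /=; nra. Qed.

Lemma qnorm2_eq0 p : qnorm2 p = 0 -> p = qzero R.
Proof.
rewrite /qnorm2; case: p => a b c d /= h.
have [a0 b0 c0 d0] : [/\ a ^+ 2 = 0, b ^+ 2 = 0, c ^+ 2 = 0 & d ^+ 2 = 0].
  by split; nra.
move: a0 b0 c0 d0 => /eqP + /eqP + /eqP + /eqP.
by rewrite !sqrf_eq0 => /eqP-> /eqP-> /eqP-> /eqP->.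
Qed.

Lemma qsub_eq0 p q : qnorm2 (qsub p q) = 0 -> p = q.
Proof.
move/qnorm2_eq0 => e; move: (congr1 (@qre R) e) (congr1 (@qi R) e).
move: (congr1 (@qj R) e) (congr1 (@qk R) e) => /= ????.
by qext; lra.
Qed.

Lemma qunit_inv p :
  qunit p -> qmul (qconj p) p = qone R /\ qmul p (qconj p) = qone R.
Proof. by rewrite /qunit qmulCq qmulqC => ->. Qed.

Lemma qnonneg_real_scale t q :
  0 <= t -> qnonneg_real q -> qnonneg_real (qscale t q).
Proof.
move=> t0; case: q => a b c d [/= -> [-> [-> h]]].
by rewrite /qnonneg_real /= !mulr0; do 3! split => //; apply: mulr_ge0.
Qed.

Lemma qnorm2_convex_comb t p q :
  qnorm2 (qadd (qscale t p) (qscale (1 - t) q)) =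
  t * qnorm2 p + (1 - t) * qnorm2 q - t * (1 - t) * qnorm2 (qsub p q).
Proof. by rewrite /qnorm2; case: p q => ???? [????] /=; ring. Qed.

Lemma qunit_convex_comb t p q : 0 < t < 1 -> qnorm2 p <= 1 -> qnorm2 q <= 1 ->
  qunit (qadd (qscale t p) (qscale (1 - t) q)) -> p = q.
Proof.
move=> /andP[t0 t1] hp hq; rewrite /qunit qnorm2_convex_comb => h.
apply: qsub_eq0; apply/eqP; rewrite eq_le qnorm2_ge0 andbT.
have tt : 0 < t * (1 - t) by apply: mulr_gt0; lra.
by rewrite -(pmulr_rle0 _ tt); nra.
Qed.

Lemma quat_polar p : exists u, [/\ qre u = 0, qunit u &
  p = qadd (Quat (qre p) 0 0 0) (qscale (Num.sqrt (qnorm2 p - qre p ^+ 2)) u)].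
Proof.
set r := Num.sqrt _.
have r2 : r ^+ 2 = qi p ^+ 2 + qj p ^+ 2 + qk p ^+ 2.
  by rewrite sqr_sqrtr /qnorm2; [ring | nra].
have [r0|rn0] := eqVneq r 0.
  exists (Quat 0 1 0 0); split => //; first by rewrite /qunit /qnorm2 /=; ring.
  have /qnorm2_eq0 v0 : qnorm2 (Quat 0 (qi p) (qj p) (qk p)) = 0.
    by rewrite /qnorm2 /= expr0n add0r -r2 r0 expr0n.
  move: (congr1 (@qi R) v0) (congr1 (@qj R) v0) (congr1 (@qk R) v0) => /= i0 j0 k0.
  by rewrite r0; qext; rewrite ?i0 ?j0 ?k0; ring.
exists (Quat 0 (qi p / r) (qj p / r) (qk p / r)); split; rewrite /qunit //.
  have -> : qnorm2 (Quat 0 (qi p / r) (qj p / r) (qk p / r)) =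
            (qi p ^+ 2 + qj p ^+ 2 + qk p ^+ 2) / r ^+ 2.
    by rewrite /qnorm2 /=; field.
  by rewrite -r2 divff // expf_neq0.
by qext; field.
Qed.

(* With p = c + r u in polar form, the endpoints are c +- sqrt (1 - c^2) u. *)
Lemma qnorm2_lt1_chord p : qnorm2 p < 1 -> exists e1 e2 (a : R),
  [/\ qunit e1 /\ qunit e2, e1 <> e2, qre e1 = qre p /\ qre e2 = qre p,
      0 < a < 1 & p = qadd (qscale a e1) (qscale (1 - a) e2)].
Proof.
move=> lt1; have [u [u0 uu pE]] := quat_polar p.
set c := qre p in pE *; set r := Num.sqrt _ in pE.
set w := Num.sqrt (1 - c ^+ 2).
have c1 : c ^+ 2 < 1 by move: lt1; rewrite /qnorm2 -/c; nra.
have w0 : 0 < w by rewrite sqrtr_gt0 subr_gt0.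
have rw : r < w by rewrite ltr_sqrt ?subr_gt0 //; lra.
have r0 : 0 <= r := sqrtr_ge0 _.
pose e (s : R) := qadd (Quat c 0 0 0) (qscale s u).
have unit_e s : s ^+ 2 = w ^+ 2 -> qunit (e s).
  rewrite sqr_sqrtr ?subr_ge0 ?ltW // => s2.
  by move: uu; rewrite /e /qunit /qnorm2 /= u0 => u1; nra.
exists (e w), (e (- w)), ((1 + r / w) / 2); split => //.
- by split; apply: unit_e; rewrite ?sqrrN.
- move=> E; move: (congr1 (@qi R) E) (congr1 (@qj R) E) (congr1 (@qk R) E).
  by move: uu; rewrite /qunit /qnorm2 /= u0 => u1 ei ej ek; nra.
- by rewrite /e /= u0; split; ring.
- have q0 : 0 <= r / w by rewrite divr_ge0 // ltW.
  have q1 : r / w < 1 by rewrite ltr_pdivrMr // mul1r.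
  by apply/andP; split; lra.
- have wn0 : w != 0 by rewrite gt_eqF.
  by rewrite {1}pE /e; qext; field.
Qed.

Section QuatSums.
Variable I : finType.
Implicit Type F : I -> quat R.

Lemma qsum_mulr F q :
  qmul (\big[@qadd R/qzero R]_i F i) q = \big[@qadd R/qzero R]_i qmul (F i) q.
Proof.
apply: (big_morph (fun y => qmul y q)); last by qext; ring.
by move=> a b; qext; ring.
Qed.
Lemma qsum_mull F q :
  qmul q (\big[@qadd R/qzero R]_i F i) = \big[@qadd R/qzero R]_i qmul q (F i).
Proof.
apply: (big_morph (fun y => qmul q y)); last by qext; ring.
by move=> a b; qext; ring.
Qed.
Lemma qsum_conj F :
  qconj (\big[@qadd R/qzero R]_i F i) = \big[@qadd R/qzero R]_i qconj (F i).
Proof.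
apply: (big_morph (@qconj R)); last by qext; ring.
by move=> a b; qext; ring.
Qed.
Lemma qsum_scale F t :
  qscale t (\big[@qadd R/qzero R]_i F i) = \big[@qadd R/qzero R]_i qscale t (F i).
Proof.
apply: (big_morph (qscale t)); last by qext; ring.
by move=> a b; qext; ring.
Qed.

Lemma qnonneg_real_gram (v : I -> quat R) :
  qnonneg_real (\big[@qadd R/qzero R]_i \big[@qadd R/qzero R]_j qmul (qconj (v i)) (v j)).
Proof.
under eq_bigr => i _ do rewrite -qsum_mull.
rewrite -qsum_mulr -qsum_conj qmulCq.
by do 3! split => //; apply: qnorm2_ge0.
Qed.

End QuatSums.
End QuatAlgebra.

Section PositiveDefinite.
Variable R : realType.
Implicit Types (phi : int -> quat R) (w : quat R).

Lemma pos_def_finType phi (T : finType) (g : T -> int) (q : T -> quat R) :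
  pos_def phi ->
  qnonneg_real (\big[@qadd R/qzero R]_(i : T) \big[@qadd R/qzero R]_(j : T)
                  qmul (qmul (qconj (q i)) (phi (g j - g i))) (q j)).
Proof.
move=> pd.
have reindex (F : T -> quat R) : \big[@qadd R/qzero R]_(i : T) F i =
    \big[@qadd R/qzero R]_(i < #|T|) F (enum_val i).
  by rewrite -big_enum_val; apply: eq_bigl => x; rewrite inE.
rewrite reindex; under eq_bigr do rewrite reindex.
exact: pd #|T| (g \o enum_val) (q \o enum_val).
Qed.

Lemma Pstar_two_point phi n w : Pstar phi ->
  qnonneg_real (qadd (qadd (qmul (qconj w) w) (qmul (qconj w) (phi n)))
                     (qadd (qmul (phi (- n)) w) (qone R))).
Proof.
case=> pd p0.
have := pos_def_finType (fun b : bool => if b then 0 else n)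
                        (fun b : bool => if b then w else qone R) pd.
by rewrite !big_bool /= !subrr sub0r subr0 p0 !qmulq1 qconj1 qmul1q.
Qed.

Lemma Pstar_conj phi n : Pstar phi -> phi (- n) = qconj (phi n).
Proof.
move=> P; have two := Pstar_two_point n _ P.
move: (two (qone R)) (two (Quat 0 1 0 0)) (two (Quat 0 0 1 0)); rewrite /qnonneg_real.
case: (phi n) => a0 a1 a2 a3; case: (phi (- n)) => b0 b1 b2 b3 /=.
by move=> [? [? [? _]]] [? [? [? _]]] [? [? [? _]]]; qext; lra.
Qed.

Lemma Pstar_norm2_le1 phi n : Pstar phi -> qnorm2 (phi n) <= 1.
Proof.
move=> P; have := Pstar_two_point n (Quat (- qre (phi n)) (- qi (phi n))
                                          (- qj (phi n)) (- qk (phi n))) P.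
rewrite (Pstar_conj n P) /qnonneg_real /qnorm2.
by case: (phi n) => a0 a1 a2 a3 /= [_ [_ [_ h]]]; nra.
Qed.

Lemma hom_to_S_0 phi : hom_to_S phi -> phi 0 = qone R.
Proof.
move=> [hm hu]; have [inv _] := qunit_inv (hu 0).
by rewrite -[phi 0]qmul1q -inv -qmulA -hm addr0.
Qed.

Lemma hom_to_S_opp phi n : hom_to_S phi -> phi (- n) = qconj (phi n).
Proof.
move=> H; have [_ inv] := qunit_inv (H.2 n).
by rewrite -[phi (- n)]qmulq1 -inv qmulA -H.1 addNr hom_to_S_0 // qmul1q.
Qed.

Lemma hom_to_S_Pstar phi : hom_to_S phi -> Pstar phi.
Proof.
move=> H; split; last exact: hom_to_S_0.
move=> k g q; set v := fun i => qmul (phi (g i)) (q i).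
have gram i j : qmul (qmul (qconj (q i)) (phi (g j - g i))) (q j) =
                qmul (qconj (v i)) (v j).
  rewrite addrC H.1 hom_to_S_opp // /v.
  by case: (q i) (q j) (phi (g i)) (phi (g j)) => ???? [????] [????] [????]; qext; ring.
under eq_bigr => i _ do under eq_bigr => j _ do rewrite gram.
exact: qnonneg_real_gram.
Qed.

Lemma hom_to_S_extreme phi : hom_to_S phi -> extreme_Pstar phi.
Proof.
move=> H; split; first exact: hom_to_S_Pstar.
move=> phi1 phi2 t t01 P1 P2 E n.
have e12 : phi1 n = phi2 n.
  apply: (qunit_convex_comb t01); try exact: Pstar_norm2_le1.
  by rewrite -E; exact: H.2.
suff -> : phi n = phi1 n by rewrite -e12.
by rewrite E -e12; case: (phi1 n) => ????; qext; ring.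
Qed.

Definition shift_form (S : finType) (d : S -> int) (c : S -> quat R) phi n :=
  \big[@qadd R/qzero R]_(k : S) \big[@qadd R/qzero R]_(l : S)
     qmul (qmul (qconj (c k)) (phi (n + d l - d k))) (c l).

Lemma pos_def_shift_form (S : finType) (d : S -> int) (c : S -> quat R) phi :
  pos_def phi -> pos_def (shift_form d c phi).
Proof.
move=> pd K g q; rewrite /shift_form.
have pd_pairs := pos_def_finType (fun x : 'I_K * S => g x.1 + d x.2)
                        (fun x : 'I_K * S => qmul (c x.2) (q x.1)) pd.
have expand i j : qmul (qmul (qconj (q i))
    (\big[@qadd R/qzero R]_k \big[@qadd R/qzero R]_l
       qmul (qmul (qconj (c k)) (phi (g j - g i + d l - d k))) (c l))) (q j) =
  \big[@qadd R/qzero R]_k \big[@qadd R/qzero R]_l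
    qmul (qmul (qconj (qmul (c k) (q i))) (phi ((g j + d l) - (g i + d k))))
         (qmul (c l) (q j)).
  rewrite qsum_mull qsum_mulr; apply: eq_bigr => k _.
  rewrite qsum_mull qsum_mulr; apply: eq_bigr => l _.
  have -> : g j + d l - (g i + d k) = g j - g i + d l - d k by ring.
  by case: (q i) (q j) (c k) (c l) (phi _) => ???? [????] [????] [????] [????]; qext; ring.
under eq_bigr => i _ do under eq_bigr => j _ do rewrite expand.
under eq_bigr => i _ do rewrite exchange_big.
under eq_bigr => i _ do under eq_bigr => k _ do rewrite pair_big.
by rewrite pair_big.
Qed.

Lemma pos_def_scale phi (t : R) :
  0 <= t -> pos_def phi -> pos_def (fun n => qscale t (phi n)).
Proof.
move=> t0 pd k g q.
have scale_out i j : qmul (qmul (qconj (q i)) (qscale t (phi (g j - g i)))) (q j) =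
    qscale t (qmul (qmul (qconj (q i)) (phi (g j - g i))) (q j)).
  by case: (q i) (q j) (phi _) => ???? [????] [????]; qext; ring.
under eq_bigr => i _ do under eq_bigr => j _ do rewrite scale_out.
under eq_bigr => i _ do rewrite -qsum_scale.
by rewrite -qsum_scale; apply: qnonneg_real_scale.
Qed.

Definition neighbour_form (sg : R) phi :=
  shift_form (fun b : bool => (b : int)) (fun b => if b then Quat sg 0 0 0 else qone R) phi.

Lemma neighbour_formE phi (sg : R) n : neighbour_form sg phi n =
  qadd (qscale (1 + sg ^+ 2) (phi n)) (qscale sg (qadd (phi (n + 1)) (phi (n - 1)))).
Proof.
rewrite /neighbour_form /shift_form !big_bool /= addr0 !subr0 addrK.
by case: (phi n) (phi (n + 1)) (phi (n - 1)) => ???? [????] [????]; qext; ring.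
Qed.

End PositiveDefinite.

Lemma int_ind_succ_pred (P : int -> Prop) :
  P 0 -> (forall n, P n -> P (n + 1)) -> (forall n, P n -> P (n - 1)) ->
  forall n, P n.
Proof.
move=> P0 PS PP; elim/int_ind => // n Pn.
  by rewrite intS addrC; exact: PS.
by rewrite intS opprD addrC; exact: PP.
Qed.

Section Homomorphisms.
Variable R : realType.
Implicit Types (h : int -> quat R) (e : quat R).

Lemma hom_to_S_of_step h e : h 0 = qone R -> qunit e ->
  (forall n, h (n + 1) = qmul (h n) e) -> hom_to_S h.
Proof.
move=> h0 ue hS; have [_ inv] := qunit_inv ue.
have hP n : h (n - 1) = qmul (h n) (qconj e).
  by rewrite -{2}(subrK 1 n) hS -qmulA inv qmulq1.
split.
  move=> m; apply: int_ind_succ_pred; first by rewrite addr0 h0 qmulq1.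
    by move=> n IH; rewrite addrA !hS IH qmulA.
  by move=> n IH; rewrite addrA !hP IH qmulA.
apply: int_ind_succ_pred; first by rewrite h0 /qunit /qnorm2 /=; ring.
  by move=> n IH; rewrite /qunit hS qnorm2M IH ue mulr1.
by move=> n IH; rewrite /qunit hP qnorm2M IH qnorm2C ue mulr1.
Qed.

Definition qpow e (n : int) : quat R :=
  match n with
  | Posz k => iter k (fun x => qmul x e) (qone R)
  | Negz k => iter k.+1 (fun x => qmul x (qconj e)) (qone R)
  end.

Lemma qpowS e n : qunit e -> qpow e (n + 1) = qmul (qpow e n) e.
Proof.
move=> /qunit_inv[inv _]; case: n => [k|[|k]].
- by rewrite addrC -intS.
- by rewrite /= qmul1q inv.
- have -> : Negz k.+1 + 1 = Negz k by lia.
  by rewrite /= -qmulA inv qmulq1.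
Qed.

Lemma exists_hom_to_S e : qunit e -> exists h, hom_to_S h /\ h 1 = e.
Proof.
move=> ue; exists (qpow e); split; last by rewrite /= qmul1q.
by apply: (hom_to_S_of_step _ ue) => // n; exact: qpowS.
Qed.

Definition three_term_rec (k : R) h :=
  forall n, qadd (h (n + 1)) (h (n - 1)) = qscale k (h n).

Lemma hom_to_S_three_term_rec h : hom_to_S h -> three_term_rec (2 * qre (h 1)) h.
Proof.
move=> H n; rewrite !H.1 hom_to_S_opp //.
by case: (h n) (h 1) => ???? [????]; qext; ring.
Qed.

Lemma three_term_rec_comb (k a b : R) h1 h2 :
  three_term_rec k h1 -> three_term_rec k h2 ->
  three_term_rec k (fun n => qadd (qscale a (h1 n)) (qscale b (h2 n))).
Proof.
move=> r1 r2 n /=.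
have regroup (x1 x2 y1 y2 : quat R) :
    qadd (qadd (qscale a x1) (qscale b y1)) (qadd (qscale a x2) (qscale b y2)) =
    qadd (qscale a (qadd x1 x2)) (qscale b (qadd y1 y2)).
  by case: x1 x2 y1 y2 => ???? [????] [????] [????]; qext; ring.
rewrite regroup r1 r2.
by case: (h1 n) (h2 n) => ???? [????]; qext; ring.
Qed.

Lemma three_term_rec_unique (k : R) h1 h2 :
  three_term_rec k h1 -> three_term_rec k h2 -> h1 0 = h2 0 -> h1 1 = h2 1 ->
  forall n, h1 n = h2 n.
Proof.
move=> r1 r2 e0 e1.
suff H n : h1 n = h2 n /\ h1 (n + 1) = h2 (n + 1) by move=> n; case: (H n).
elim/int_ind_succ_pred: n => [|n [en eS]|n [en eS]]; first by rewrite add0r.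
  split => //; apply: (@qaddIr _ (h1 n)).
  by have := r1 (n + 1); rewrite addrK => ->; rewrite eS en -(r2 (n + 1)) addrK.
split; last by rewrite subrK.
apply: (@qaddIr _ (h1 (n + 1))).
by rewrite qaddC r1 eS en -r2 qaddC.
Qed.

End Homomorphisms.

Section ExtremePoints.
Variable R : realType.
Implicit Types (phi : int -> quat R) (p : quat R).

(* The quadratic form at the points 0, 1, -n with weights -phi 1, 1, -D has
   real part 1 - |phi 1|^2 - |D|^2, where D = phi (n + 1) - phi n phi 1. *)
Lemma Pstar_mul_unit phi n : Pstar phi -> qunit (phi 1) ->
  phi (n + 1) = qmul (phi n) (phi 1).
Proof.
move=> P u1; set s := phi 1; set D := qsub (phi (n + 1)) (qmul (phi n) s).
pose qopp p := Quat (- qre p) (- qi p) (- qj p) (- qk p).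
have := pos_def_finType
  (fun i : 'I_3 => match val i with 0 => 0 | 1 => 1 | _ => - n end)
  (fun i : 'I_3 => match val i with 0 => qopp s | 1 => qone R | _ => qopp D end) P.1.
rewrite !big_ord_recr !big_ord0 /= !subrr !subr0 !sub0r !opprK -opprD (addrC 1 n).
rewrite (Pstar_conj 1 P) (Pstar_conj n P) (Pstar_conj (n + 1) P) P.2 => -[_ [_ [_]]].
set X := (X in 0 <= X) => hX.
have EX : X = 1 - qnorm2 s - qnorm2 D.
  rewrite /X /D /s /qopp; case: (phi 1) (phi n) (phi (n + 1)) => ???? [????] [????].
  by rewrite /qnorm2 /=; ring.
apply: qsub_eq0; apply/eqP; rewrite eq_le qnorm2_ge0 andbT.
by move: hX; rewrite EX u1; lra.
Qed.

(* phi = (1 + c)/2 psi_+ + (1 - c)/2 psi_- with the elements of P_*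
   psi_sg n = (2 phi n + sg (phi (n + 1) + phi (n - 1))) / (2 + 2 sg c). *)
Lemma extreme_three_term_rec phi : extreme_Pstar phi -> qre (phi 1) ^+ 2 < 1 ->
  three_term_rec (2 * qre (phi 1)) phi.
Proof.
move=> [P ext]; set c := qre (phi 1) => c2.
have [cgt cl] : -1 < c /\ c < 1 by split; nra.
pose psi (sg : R) n := qscale (2 + 2 * sg * c)^-1 (neighbour_form sg phi n).
have Ppsi sg : sg = 1 \/ sg = -1 -> Pstar (psi sg).
  move=> hsg; have nz : 2 + 2 * sg * c != 0 by case: hsg => ->; apply/eqP; nra.
  split.
    apply: pos_def_scale; last exact: pos_def_shift_form P.1.
    by rewrite invr_ge0; case: hsg => ->; nra.
  have sg2 : 1 + sg ^+ 2 = 2 by case: hsg => ->; rewrite ?sqrrN expr1n.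
  rewrite /psi neighbour_formE add0r sub0r (Pstar_conj 1 P) P.2 sg2.
  by move: nz; rewrite /c; case: (phi 1) => ???? /= nz; qext; field.
have nz : (2 + -2 * c != 0) && (2 + 2 * c != 0) by apply/andP; split; apply/eqP; nra.
have t01 : 0 < (1 + c) / 2 < 1 by apply/andP; split; lra.
have decomp n : phi n =
    qadd (qscale ((1 + c) / 2) (psi 1 n)) (qscale (1 - (1 + c) / 2) (psi (-1) n)).
  rewrite /psi !neighbour_formE sqrrN expr1n.
  by case: (phi n) (phi (n + 1)) (phi (n - 1)) => ???? [????] [????]; qext; field.
have solve x y z : (2 + 2 * c)^-1 * ((1 + 1 ^+ 2) * x + 1 * (y + z)) = x ->
    y + z = 2 * c * x.
  have /andP[_ nzp] := nz.
  by move=> /(congr1 ( *%R (2 + 2 * c))); rewrite mulrA mulfV // mul1r; nra.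
move=> n.
have [+ _] := ext _ _ _ t01 (Ppsi 1 (or_introl erefl)) (Ppsi (-1) (or_intror erefl)) decomp n.
rewrite /psi neighbour_formE mulr1.
case: (phi n) (phi (n + 1)) (phi (n - 1)) => ???? [????] [????] e.
move: (congr1 (@qre R) e) (congr1 (@qi R) e) (congr1 (@qj R) e) (congr1 (@qk R) e).
by move=> /= /solve ? /solve ? /solve ? /solve ?; qext.
Qed.

Lemma extreme_Pstar_unit phi : extreme_Pstar phi -> qunit (phi 1).
Proof.
move=> E; have [P ext] := E.
have [//|lt1] : qnorm2 (phi 1) = 1 \/ qnorm2 (phi 1) < 1.
  by have := Pstar_norm2_le1 1 P; rewrite le_eqVlt => /orP[/eqP|]; [left|right].
have [e1 [e2 [a [[u1 u2] ne12 [re1 re2] a01 phi1E]]]] := qnorm2_lt1_chord lt1.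
have [h1 [H1 h11]] := exists_hom_to_S u1.
have [h2 [H2 h21]] := exists_hom_to_S u2.
have rec : three_term_rec (2 * qre (phi 1)) phi.
  by apply: extreme_three_term_rec => //; move: lt1; rewrite /qnorm2; nra.
have rec1 := hom_to_S_three_term_rec H1; rewrite h11 re1 in rec1.
have rec2 := hom_to_S_three_term_rec H2; rewrite h21 re2 in rec2.
have decomp := three_term_rec_unique rec (three_term_rec_comb a (1 - a) rec1 rec2).
have {}decomp : forall n, phi n = qadd (qscale a (h1 n)) (qscale (1 - a) (h2 n)).
  apply: decomp; last by rewrite h11 h21.
  by rewrite P.2 !hom_to_S_0 //; qext; ring.
have [e1E e2E] := ext _ _ _ a01 (hom_to_S_Pstar H1) (hom_to_S_Pstar H2) decomp 1.
by case: ne12; rewrite -h11 -h21 e1E e2E.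
Qed.

End ExtremePoints.

Theorem mainTheorem8 (R : realType) (phi : int -> quat R) :
  extreme_Pstar phi <-> hom_to_S phi.
Proof.
split; last exact: hom_to_S_extreme.
move=> E; have [P _] := E; have u1 := extreme_Pstar_unit E.
by apply: (hom_to_S_of_step P.2 u1) => n; apply: Pstar_mul_unit.
Qed.
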